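(* Let $N\ge2$, $T>0$, and consider the problem of minimizing $\mathbb V(T)=\frac1N\sum_{i=1}^N\xi_i(T)^2$ over $\alpha\in\mathcal U$, where $\dot\xi_i=-\xi_i+(1-\alpha_i)\bar\xi$, $\bar\xi=\frac1N\sum_j\xi_j$, with initial datum satisfying $\bar\xi(0)>0$ and $\xi_1(0)\ge\dots\ge\xi_N(0)$. Let $\bar\xi_{1,N-1}=\frac1{N-1}\sum_{i=1}^{N-1}\xi_i$ and $$t_N=\frac{N}{N-1}\ln\Big(\frac{(N-1)^2}{N}\,\frac{\bar\xi_{1,N-1}(0)-\xi_N(0)}{\bar\xi(0)}+1\Big).$$ If $T\ge t_N$, then every optimal control of this problem belongs to $\mathcal U_{FS}$, and its trajectory satisfies $\xi_i(T)=\bar\xi(T)$ for every $i\in\{1,\dots,N\}$.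
   Context: $\mathcal U$ is the set of measurable $\alpha:[0,T]\to[0,1]^N$ with $\sum_i\alpha_i(t)\le1$ for all $t$; $\mathcal U_{FS}\subset\mathcal U$ is the subset with $\sum_i\alpha_i(t)=1$ for all $t$. *)

From HB Require Import structures.
From mathcomp Require Import all_boot all_order all_algebra.
From mathcomp Require Import all_classical all_reals all_analysis.
Set Implicit Arguments. Unset Strict Implicit. Unset Printing Implicit Defensive.
Import Order.TTheory GRing.Theory Num.Theory.
Import numFieldNormedType.Exports.
Local Open Scope classical_set_scope.
Local Open Scope ring_scope.

Section Defs.
Context {R : realType}.

(* Agents are indexed by 0, ..., N-1 (paper: 1, ..., N). *)

Definition avg (N : nat) (x : nat -> R) : R := (N%:R)^-1 * \sum_(i < N) x i.

Definition cost (N : nat) (x : nat -> R) : R := (N%:R)^-1 * \sum_(i < N) x i ^+ 2.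

Definition admissible (N : nat) (T : R) (a : nat -> R -> R) : Prop :=
  (forall i, (i < N)%N -> measurable_fun `[0, T] (a i)) /\
  (forall t, 0 <= t <= T ->
     (forall i, (i < N)%N -> 0 <= a i t <= 1) /\ \sum_(i < N) a i t <= 1).

Definition full_saturation (N : nat) (T : R) (a : nat -> R -> R) : Prop :=
  {ae (@lebesgue_measure R), forall t, 0 <= t <= T -> \sum_(i < N) a i t = 1}.

Definition rhs (N : nat) (a : nat -> R -> R) (x : nat -> R -> R) (i : nat) (s : R) : R :=
  - x i s + (1 - a i s) * avg N (fun j => x j s).

Definition is_traj (N : nat) (T : R) (x0 : nat -> R) (a : nat -> R -> R)
  (x : nat -> R -> R) : Prop :=
  forall i, (i < N)%N ->
    forall t, 0 <= t <= T ->
      (@lebesgue_measure R).-integrable `[0, t] (fun s => (rhs N a x i s)%:E) /\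
      x i t = x0 i + Rintegral (@lebesgue_measure R) `[0, t] (rhs N a x i).

Definition optimal (N : nat) (T : R) (x0 : nat -> R) (a : nat -> R -> R)
  (x : nat -> R -> R) : Prop :=
  admissible N T a /\ is_traj N T x0 a x /\
  forall b y, admissible N T b -> is_traj N T x0 b y ->
    cost N (fun i => x i T) <= cost N (fun i => y i T).

Definition tN (N : nat) (x0 : nat -> R) : R :=
  (N%:R / (N.-1)%:R) *
  ln (((N.-1)%:R ^+ 2 / N%:R) * ((avg N.-1 x0 - x0 N.-1) / avg N x0) + 1).

End Defs.

From mathcomp Require Import all_boot all_order all_algebra.
From mathcomp Require Import all_classical all_reals all_analysis.
From mathcomp Require Import ring lra.
Set Implicit Arguments. Unset Strict Implicit. Unset Printing Implicit Defensive.
Import Order.TTheory GRing.Theory Num.Theory.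
Import numFieldNormedType.Exports.
Local Open Scope classical_set_scope.
Local Open Scope ring_scope.

(* Averaging the dynamics gives z' = - c z for the mean z of the agents, where
   c = (1/N) sum_i alpha_i lies in [0, 1/N].  A comparison argument for this
   integral equation shows z(t) >= z(0) e^(-t/N), with equality at time T only if
   c = 1/N almost everywhere on [0, T].  Since V = variance + z^2, every control
   has V(T) >= z(0)^2 e^(-2T/N).  When T >= t_N an explicit constant control
   saturates the constraint and brings all agents to the mean exactly at time T,
   so it attains this bound; hence so does every optimal control, which forces
   zero variance at T, z(T) = z(0) e^(-T/N), and therefore full saturation. *)

Section Integrals.
Context {d : measure_display} {T : measurableType d} {R : realType}.
Variables (mu : {measure set T -> \bar R}) (D : set T).
Hypothesis mD : measurable D.

Lemma integrable_Rintegral_sum (n : nat) (f : nat -> T -> R) :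
  (forall i, (i < n)%N -> mu.-integrable D (EFin \o f i)) ->
  mu.-integrable D (EFin \o (fun s => \sum_(i < n) f i s)) /\
  \int[mu]_(s in D) (\sum_(i < n) f i s) = \sum_(i < n) \int[mu]_(s in D) f i s.
Proof.
elim: n => [_|n IH fi].
  under eq_fun do rewrite big_ord0.
  by rewrite big_ord0 Rintegral_cst // mul0r; split; first exact: integrable0.
have [iS IS] := IH (fun i lt_in => fi i (ltnW lt_in)).
under eq_fun do rewrite big_ord_recr.
have fn := fi n (ltnSn n).
by rewrite big_ord_recr /= RintegralD ?IS //; split; first exact: (integrableD _ iS fn).
Qed.

Lemma Rintegral_eq0_ae (f : T -> R) : mu.-integrable D (EFin \o f) ->
  (forall s, D s -> 0 <= f s) -> \int[mu]_(s in D) f s = 0 ->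
  {ae mu, forall s, D s -> f s = 0}.
Proof.
move=> if_ f_ge0 int0.
have abs_int0 : (\int[mu]_(s in D) `|(EFin \o f) s| = 0)%E.
  have -> : (\int[mu]_(s in D) `|(EFin \o f) s| = \int[mu]_(s in D) (EFin \o f) s)%E.
    by apply: eq_integral => s /set_mem Ds; rewrite gee0_abs // lee_fin f_ge0.
  by rewrite -(fineK (integrable_fin_num mD if_)) -/(Rintegral mu D f) int0.
apply: filterS ((ae_eq_integral_abs mu mD (measurable_int mu if_)).1 abs_int0).
by move=> s f0 Ds; have [] := f0 Ds.
Qed.

End Integrals.

Section RealLine.
Context {R : realType}.
Local Notation mu := (@lebesgue_measure R).

Lemma is_derive_expR_scale (k s : R) :
  is_derive s 1 (fun u => expR (k * u)) (k * expR (k * s)).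
Proof.
have -> : (fun u => expR (k * u)) = expR \o *%R k by [].
rewrite mulrC; apply: is_derive1_comp.
by rewrite -[k in is_derive _ _ _ k]mulr1; exact: is_deriveZ.
Qed.

Lemma continuous_expR_scale (k : R) : continuous (fun s => expR (k * s)).
Proof.
move=> s; apply: continuous_comp; last exact: continuous_expR.
by apply: continuousM; [exact: cvg_cst|exact: cvg_id].
Qed.

Lemma expR_scale_integral (k t : R) : 0 <= t ->
  mu.-integrable `[0, t] (EFin \o fun s => k * expR (k * s)) /\
  expR (k * t) = 1 + \int[mu]_(s in `[0, t]) (k * expR (k * s)).
Proof.
move=> t0; have kexp_cont : continuous (fun s => k * expR (k * s)).
  by move=> s; apply: cvgM; [exact: cvg_cst|exact: continuous_expR_scale].
split.
  apply: continuous_compact_integrable; first exact: segment_compact.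
  exact: continuous_subspaceT.
move: t0; rewrite le_eqVlt => /predU1P[<-|t0].
  by rewrite set_itv1 Rintegral_set1 mulr0 expR0 addr0.
rewrite /Rintegral (continuous_FTC2 t0 (F := fun s => expR (k * s))) /=.
- by rewrite mulr0 expR0 [RHS]addrC subrK.
- exact: continuous_subspaceT.
- split.
  + by move=> s _; case: (is_derive_expR_scale k s).
  + by apply: cvg_at_right_filter; exact: continuous_expR_scale.
  + by apply: cvg_at_left_filter; exact: continuous_expR_scale.
- by move=> s _; rewrite derive1E (@derive_val _ _ _ _ _ _ _ (is_derive_expR_scale k s)).
Qed.

Lemma expR_combination_integral (c1 c2 k1 k2 t : R) : 0 <= t ->
  mu.-integrable `[0, t]
    (EFin \o fun s => c1 * (k1 * expR (k1 * s)) + c2 * (k2 * expR (k2 * s))) /\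
  c1 * expR (k1 * t) + c2 * expR (k2 * t) = c1 + c2 +
    \int[mu]_(s in `[0, t]) (c1 * (k1 * expR (k1 * s)) + c2 * (k2 * expR (k2 * s))).
Proof.
move=> t_ge0.
have [i1 E1] := expR_scale_integral k1 t_ge0; have [i2 E2] := expR_scale_integral k2 t_ge0.
split; first exact: (integrableD _ (integrableZl _ c1 i1) (integrableZl _ c2 i2)).
rewrite (RintegralD _ (integrableZl _ c1 i1) (integrableZl _ c2 i2)) //.
have /= I1 := RintegralZl c1 _ i1; have /= I2 := RintegralZl c2 _ i2.
by rewrite I1 // I2 // E1 E2; ring.
Qed.

Lemma last_point_above (f : R -> R) (a b c : R) : a <= b ->
  {within `[a, b], continuous f} -> c <= f a -> f b < c ->
  exists2 u, a <= u < b & c <= f u /\ (forall v, u < v <= b -> f v < c).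
Proof.
move=> ab fc cfa fbc.
pose A := [set u | a <= u <= b /\ c <= f u].
have Aa : A a by rewrite /A /= lexx ab.
have supA : has_sup A by split; [exists a | exists b => u [/andP[_ ->]]].
have a_sup : a <= sup A := sup_upper_bound supA Aa.
have sup_b : sup A <= b by apply: ge_sup; [exists a | move=> u [/andP[_ ->]]].
have c_fsup : c <= f (sup A).
  rewrite leNgt; apply/negP => fsup_c.
  have /subspace_continuousP/(_ (sup A)) := fc.
  rewrite /= in_itv /= a_sup sup_b => /(_ isT) /cvgrPdist_lt.
  move=> /(_ (c - f (sup A))); rewrite subr_gt0 => /(_ fsup_c).
  rewrite near_withinE => /nbhs_ballP[e e0 near_sup].
  have [u Au sup_u] := sup_adherent e0 supA.
  have u_sup := sup_upper_bound supA Au.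
  case: Au => uab cfu.
  have := near_sup u; rewrite /ball /= in_itv /= uab ger0_norm ?subr_ge0 //.
  rewrite ltrBlDr -ltrBlDl => /(_ sup_u isT).
  by rewrite distrC => /(le_lt_trans (ler_norm _)); rewrite /from_subspace; lra.
exists (sup A).
  by rewrite a_sup lt_neqAle sup_b andbT; apply: contraTneq fbc => <-; rewrite -leNgt.
split=> // v /andP[sup_v vb]; rewrite ltNge; apply/negP => cfv.
have : v <= sup A.
  by apply: sup_upper_bound => //; rewrite /A /= vb (le_trans a_sup (ltW sup_v)).
by rewrite leNgt sup_v.
Qed.

(* G t := g0 + int_0^t phi satisfies G' = phi >= - c G with c >= 0, so G stays
   nonnegative once it is. *)
Lemma Rintegral_nonneg_forward (phi c : R -> R) (T g0 s0 : R) :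
  mu.-integrable `[0, T] (EFin \o phi) ->
  (forall s, 0 <= s <= T -> 0 <= c s) ->
  (forall s, 0 <= s <= T -> - c s * (g0 + \int[mu]_(u in `[0, s]) phi u) <= phi s) ->
  0 <= s0 -> 0 <= g0 + \int[mu]_(u in `[0, s0]) phi u ->
  forall t, s0 <= t <= T -> 0 <= g0 + \int[mu]_(u in `[0, t]) phi u.
Proof.
move=> iphi c_ge0 phi_ge s0_ge0 G_s0 t /andP[s0t tT].
rewrite leNgt; apply/negP => G_t.
have T_ge0 : 0 <= T by rewrite (le_trans s0_ge0) ?(le_trans s0t).
have P_cont : {within `[s0, t], continuous (parameterized_integral mu 0)^~ phi}.
  apply: continuous_subspaceW (parameterized_integral_continuous T_ge0 iphi).
  by apply: subset_itv; rewrite bnd_simp.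
have [||u /andP[s0u ut] [G_u G_after]] := last_point_above (c := - g0) s0t P_cont.
- by rewrite /parameterized_integral; lra.
- by rewrite /parameterized_integral; lra.
have i_t : mu.-integrable `[0, t] (EFin \o phi).
  by apply: integrableS iphi => //; apply: subset_itvl; rewrite bnd_simp.
have := Rintegral_itvB i_t (a := BLeft 0) (b := BRight t) (x := u).
rewrite !bnd_simp (le_trans s0_ge0 s0u) (ltW ut) => /(_ isT isT) int_split.
have : 0 <= \int[mu]_(v in `]u, t]) phi v.
  apply: Rintegral_ge0 => v; rewrite /= in_itv /= => /andP[uv vt].
  have vT : 0 <= v <= T.
    by rewrite (le_trans (le_trans s0_ge0 s0u) (ltW uv)) (le_trans vt tT).
  apply: le_trans (phi_ge v vT); rewrite mulNr oppr_ge0 mulr_ge0_le0 ?c_ge0 //.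
  by have := G_after v; rewrite uv vt /parameterized_integral => /(_ isT); lra.
by move: G_u; rewrite /parameterized_integral; lra.
Qed.

Definition traj_mean (N : nat) (x : nat -> R -> R) (t : R) : R := avg N (fun j => x j t).

Definition saturation (N : nat) (a : nat -> R -> R) (t : R) : R :=
  (N%:R)^-1 * \sum_(i < N) a i t.

(* The mean under full saturation, solving z' = - z / N. *)
Definition fs_mean (N : nat) (m t : R) : R := m * expR (- (N%:R)^-1 * t).

Lemma avg_rhs (N : nat) (a x : nat -> R -> R) (s : R) : (0 < N)%N ->
  avg N (fun i => rhs N a x i s) = - saturation N a s * traj_mean N x s.
Proof.
rewrite -(ltr0n R) => N_gt0; rewrite /avg /rhs /saturation /traj_mean /avg.
rewrite big_split /= -mulr_suml sumrB sumr_const card_ord sumrN -mulr_natl.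
by field; rewrite gt_eqF.
Qed.

Lemma fs_mean_integral (N : nat) (m t : R) : 0 <= t ->
  mu.-integrable `[0, t] (EFin \o fun s => - (N%:R)^-1 * fs_mean N m s) /\
  fs_mean N m t = m + \int[mu]_(s in `[0, t]) (- (N%:R)^-1 * fs_mean N m s).
Proof.
move=> t_ge0; have [iexp exp_eq] := expR_scale_integral (- (N%:R)^-1) t_ge0.
have -> : (fun s => - (N%:R)^-1 * fs_mean N m s) =
    (fun s => m * (- (N%:R)^-1 * expR (- (N%:R)^-1 * s))).
  by apply/funext => s; rewrite /fs_mean mulrCA.
split; first exact: (integrableZl _ m iexp).
by rewrite RintegralZl // /fs_mean exp_eq mulrDr mulr1.
Qed.

Lemma cost_decomposition (N : nat) (v : nat -> R) : (0 < N)%N ->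
  cost N v = (N%:R)^-1 * \sum_(i < N) (v i - avg N v) ^+ 2 + avg N v ^+ 2.
Proof.
rewrite -(ltr0n R) => N_gt0.
have sum_v : \sum_(i < N) v i = N%:R * avg N v by rewrite /avg mulrA mulfV ?gt_eqF ?mul1r.
rewrite /cost [in RHS](eq_bigr (fun i : 'I_N => v i ^+ 2 - 2 * avg N v * v i + avg N v ^+ 2)).
  rewrite big_split sumrB /= -mulr_sumr sum_v sumr_const card_ord -mulr_natl.
  by field; rewrite gt_eqF.
by move=> i _; ring.
Qed.

Lemma cost_le_sqr_consensus (N : nat) (v : nat -> R) (e : R) : (0 < N)%N ->
  0 <= e <= avg N v -> cost N v <= e ^+ 2 ->
  avg N v = e /\ forall i, (i < N)%N -> v i = avg N v.
Proof.
move=> N_gt0 /andP[e_ge0 e_le]; rewrite cost_decomposition //.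
have var_ge0 : 0 <= (N%:R)^-1 * \sum_(i < N) (v i - avg N v) ^+ 2.
  by rewrite mulr_ge0 ?invr_ge0 ?ler0n ?sumr_ge0 // => i _; rewrite sqr_ge0.
move=> cost_le; have avg_ge0 : 0 <= avg N v := le_trans e_ge0 e_le.
have sqr_le : e ^+ 2 <= avg N v ^+ 2 by nra.
have var0 : (N%:R)^-1 * \sum_(i < N) (v i - avg N v) ^+ 2 = 0 by lra.
have sqr_eq : avg N v ^+ 2 = e ^+ 2 by lra.
split; first by apply/eqP; rewrite -(eqrXn2 (n := 2)) // sqr_eq.
move=> i lt_iN; apply/eqP; rewrite -subr_eq0 -sqrf_eq0; apply/eqP.
move: var0 => /eqP; rewrite mulf_eq0 invr_eq0 pnatr_eq0 eqn0Ngt N_gt0 /=.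
move=> /eqP /psumr_eq0P sum0.
by apply: (@sum0 _ (Ordinal lt_iN)) => // j _; exact: sqr_ge0.
Qed.

Section MeanDynamics.
Variables (N : nat) (T : R) (x0 : nat -> R) (a x : nat -> R -> R).
Hypotheses (N_gt0 : (0 < N)%N) (adm : admissible N T a) (traj : is_traj N T x0 a x).

Local Notation z := (traj_mean N x).
Local Notation e := (fs_mean N (avg N x0)).

Lemma saturation_bounds s : 0 <= s <= T -> 0 <= saturation N a s <= (N%:R)^-1.
Proof.
move=> sT; have [a_bnd sum_le1] := adm.2 s sT.
rewrite /saturation mulr_ge0 ?invr_ge0 ?ler0n ?ler_piMr ?invr_ge0 ?ler0n //=.
by apply: sumr_ge0 => i _; case/andP: (a_bnd i (ltn_ord i)).
Qed.

Lemma traj_mean_integral t : 0 <= t <= T ->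
  mu.-integrable `[0, t] (EFin \o fun s => - saturation N a s * z s) /\
  z t = avg N x0 + \int[mu]_(s in `[0, t]) (- saturation N a s * z s).
Proof.
move=> tT; have [i_sum int_sum] := @integrable_Rintegral_sum _ _ _ mu _
  (measurable_itv `[0, t]) N (rhs N a x) (fun i lt_iN => (traj lt_iN tT).1).
have -> : (fun s => - saturation N a s * z s) =
    (fun s => (N%:R)^-1 * \sum_(i < N) rhs N a x i s).
  by apply/funext => s; rewrite -avg_rhs.
split; first exact: (integrableZl _ _ i_sum).
rewrite RintegralZl // int_sum /traj_mean /avg -mulrDr -big_split /=.
by congr (_ * _); apply: eq_bigr => i _; rewrite (traj (ltn_ord i) tT).2.
Qed.

Lemma scaled_fs_mean_le_forward (lam s0 : R) : 0 <= lam -> 0 <= avg N x0 ->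
  0 <= s0 -> lam * e s0 <= z s0 -> forall t, s0 <= t <= T -> lam * e t <= z t.
Proof.
move=> lam_ge0 m0_ge0 s0_ge0 le_s0 t /andP[s0t tT].
have scaled_e u : lam * e u = fs_mean N (lam * avg N x0) u by rewrite /fs_mean mulrA.
pose phi s := - saturation N a s * z s - (- (N%:R)^-1 * fs_mean N (lam * avg N x0) s).
have gap_eq u : 0 <= u <= T -> mu.-integrable `[0, u] (EFin \o phi) /\
    z u - lam * e u = avg N x0 - lam * avg N x0 + \int[mu]_(s in `[0, u]) phi s.
  move=> uT; have [iz z_eq] := traj_mean_integral uT.
  have [ie e_eq] := fs_mean_integral N (lam * avg N x0) (proj1 (andP uT)).
  split; first exact: (integrableB _ iz ie).
  by rewrite RintegralB // scaled_e z_eq e_eq; ring.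
have s0T : 0 <= s0 <= T by rewrite s0_ge0 (le_trans s0t tT).
have tT' : 0 <= t <= T by rewrite (le_trans s0_ge0 s0t) tT.
have T_ge0 : 0 <= T by case/andP: tT' => t0 /(le_trans t0).
rewrite -subr_ge0 (gap_eq t tT').2.
apply: (Rintegral_nonneg_forward (c := saturation N a) (gap_eq T _).1 _ _ s0_ge0);
  rewrite ?s0t ?lexx ?T_ge0 //.
- by move=> s /saturation_bounds /andP[].
- move=> s sT; rewrite -(gap_eq s sT).2 /phi scaled_e.
  have /andP[_ sat_le] := saturation_bounds sT.
  have e_ge0 : 0 <= fs_mean N (lam * avg N x0) s.
    by apply: mulr_ge0; [exact: mulr_ge0|exact: expR_ge0].
  have : 0 <= fs_mean N (lam * avg N x0) s * ((N%:R)^-1 - saturation N a s).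
    by rewrite mulr_ge0 // subr_ge0.
  move: (saturation N a s) (z s) (fs_mean _ _ s) => c zs es; lra.
- by rewrite -(gap_eq s0 s0T).2 subr_ge0.
Qed.

Lemma traj_mean0 : 0 <= T -> z 0 = avg N x0.
Proof.
move=> T_ge0.
by rewrite (traj_mean_integral (t := 0) _).2 ?lexx ?T_ge0 // set_itv1 Rintegral_set1 addr0.
Qed.

Lemma fs_mean_le_traj_mean t : 0 <= avg N x0 -> 0 <= t <= T -> e t <= z t.
Proof.
move=> m0_ge0 /andP[t_ge0 tT].
rewrite -[e t]mul1r; apply: (scaled_fs_mean_le_forward ler01 m0_ge0 (lexx 0)).
  by rewrite mul1r traj_mean0 ?(le_trans t_ge0 tT) // /fs_mean mulr0 expR0 mulr1.
by rewrite tT t_ge0.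
Qed.

Lemma traj_mean_eq_fs_mean : 0 < avg N x0 -> z T = e T ->
  forall s, 0 <= s <= T -> z s = e s.
Proof.
move=> m0_gt0 zT_eq s sT.
apply/eqP; rewrite eq_le (fs_mean_le_traj_mean (ltW m0_gt0) sT) andbT.
rewrite leNgt; apply/negP => lt_es_zs.
have e_gt0 u : 0 < e u by rewrite /fs_mean mulr_gt0 ?expR_gt0.
have lam_gt1 : 1 < z s / e s by rewrite ltr_pdivlMr // mul1r.
have /andP[s_ge0 s_T] := sT.
have := scaled_fs_mean_le_forward (ltW (lt_trans ltr01 lam_gt1)) (ltW m0_gt0) s_ge0.
rewrite divfK ?gt_eqF // => /(_ (lexx _) T); rewrite s_T lexx zT_eq => /(_ isT).
by rewrite ger_pMl // leNgt lam_gt1.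
Qed.

Lemma full_saturation_of_fs_mean : 0 < avg N x0 -> 0 <= T ->
  (forall s, 0 <= s <= T -> z s = e s) -> full_saturation N T a.
Proof.
move=> m0_gt0 T_ge0 z_eq_e.
have TT : 0 <= T <= T by rewrite T_ge0 lexx.
have [iz zT] := traj_mean_integral TT; have [ie eT] := fs_mean_integral N (avg N x0) T_ge0.
pose h s := ((N%:R)^-1 - saturation N a s) * e s.
have h_eq : {in `[0, T]%classic,
    (fun s => - saturation N a s * z s - - (N%:R)^-1 * e s) =1 h}.
  by move=> s /set_mem; rewrite /= in_itv /= => sT; rewrite z_eq_e // /h; ring.
have ih : mu.-integrable `[0, T] (EFin \o h).
  apply: eq_integrable (integrableB _ iz ie) => // s sT.
  by rewrite /= -EFinD h_eq.
have : \int[mu]_(s in `[0, T]) h s = 0.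
  rewrite -(eq_Rintegral mu h_eq) RintegralB //.
  by have := z_eq_e T TT; rewrite zT eT; lra.
have e_gt0 u : 0 < e u by rewrite /fs_mean mulr_gt0 ?expR_gt0.
have h_ge0 s : `[0, T]%classic s -> 0 <= h s.
  rewrite /= in_itv /= => sT; have /andP[_ sat_le] := saturation_bounds sT.
  by apply: mulr_ge0; [rewrite subr_ge0|exact: ltW].
move=> int0; apply: (filterS _ (Rintegral_eq0_ae _ ih h_ge0 int0)) => [s h0 sT|//].
have N_neq0 : (N%:R : R)^-1 != 0 by rewrite invr_neq0 // pnatr_eq0 -lt0n.
have /eqP := h0 sT; rewrite mulf_eq0 (gt_eqF (e_gt0 s)) orbF subr_eq0 /saturation.
by rewrite -{1}[_^-1]mulr1 => /eqP /(mulfI N_neq0) ->.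
Qed.

End MeanDynamics.

Section FastControl.
Variables (p : nat) (T : R) (x0 : nat -> R).
Hypotheses (T_gt0 : 0 < T) (m0_gt0 : 0 < avg p.+2 x0)
  (x0_noninc : forall i j, (i <= j)%N -> (j < p.+2)%N -> x0 j <= x0 i)
  (tN_le_T : tN p.+2 x0 <= T).

Local Notation n := (p.+2%:R : R).
Local Notation q := (p.+1%:R : R).
Local Notation m0 := (avg p.+2 x0).

Let X := expR (T * q / n).
Let gain := m0 * (n / q) * (X - 1).
Let spread := n * (m0 - x0 p.+1).

Let q_eq : q = n - 1. Proof. by rewrite [in RHS]mulrSr addrK. Qed.
Let q_gt0 : 0 < q. Proof. by rewrite ltr0n. Qed.
Let n_gt0 : 0 < n. Proof. by rewrite ltr0n. Qed.

Let X_gt1 : 1 < X.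
Proof. by rewrite /X pexpR_gt1 // !mulr_gt0 // invr_gt0. Qed.

Let gain_gt0 : 0 < gain.
Proof.
by apply: mulr_gt0; [apply: mulr_gt0 => //; exact: divr_gt0|rewrite subr_gt0].
Qed.

Let sum_x0 : \sum_(i < p.+2) x0 i = n * m0.
Proof. by rewrite /avg mulrA mulfV ?gt_eqF ?mul1r. Qed.

Let sum_dev : \sum_(i < p.+2) (x0 i - m0) = 0.
Proof. by rewrite sumrB sum_x0 sumr_const card_ord mulr_natl subrr. Qed.

Let last_le i : (i < p.+2)%N -> x0 p.+1 <= x0 i.
Proof. by move=> lt_i; apply: x0_noninc. Qed.

Let sum_sub_last : \sum_(i < p.+2) (x0 i - x0 p.+1) = spread.
Proof. by rewrite sumrB sum_x0 sumr_const card_ord /spread mulrBr !mulr_natl. Qed.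

Let sub_last_le_spread i : (i < p.+2)%N -> x0 i - x0 p.+1 <= spread.
Proof.
move=> lt_i; rewrite -sum_sub_last (bigD1 (Ordinal lt_i)) //= lerDl.
by apply: sumr_ge0 => j _; rewrite subr_ge0 last_le.
Qed.

Lemma spread_le_gain : spread <= gain.
Proof.
have spread_ge0 : 0 <= spread.
  by rewrite -sum_sub_last; apply: sumr_ge0 => j _; rewrite subr_ge0 last_le.
have spread_eq : q * (avg p.+1 x0 - x0 p.+1) = spread.
  rewrite -sum_sub_last big_ord_recr /= subrr addr0 sumrB sumr_const card_ord.
  by rewrite /avg mulrBr mulrA mulfV ?gt_eqF // mul1r mulr_natl.
pose Q := q * spread / (n * m0) + 1.
have Q_eq : (q ^+ 2 / n) * ((avg p.+1 x0 - x0 p.+1) / m0) + 1 = Q.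
  by rewrite /Q -spread_eq; field; rewrite !gt_eqF.
have Q_ge1 : 1 <= Q.
  by rewrite /Q lerDr; apply: divr_ge0; apply: mulr_ge0 => //; exact: ltW.
have : ln Q <= T * q / n.
  move: tN_le_T; rewrite /tN /= Q_eq => tN_le.
  rewrite -(ler_pM2l (_ : 0 < n / q)) ?divr_gt0 //; apply: le_trans tN_le _.
  by rewrite le_eqVlt; apply/orP; left; apply/eqP; field; rewrite !gt_eqF.
rewrite -ler_expR lnK ?posrE ?(lt_le_trans ltr01 Q_ge1) // -/X => Q_le_X.
have le_X : q * spread / (n * m0) <= X - 1 by rewrite lerBrDr.
have -> : spread = m0 * (n / q) * (q * spread / (n * m0)) by field; rewrite !gt_eqF.
by rewrite /gain ler_pM2l // mulr_gt0 // divr_gt0.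
Qed.

(* Under this constant control each deviation x_i - m0 e^(-t/n) is a multiple of
   e^(-t) (1 - (e^(t q/n) - 1) / (X - 1)), which vanishes at t = T; the bound
   [spread_le_gain], i.e. [tN <= T], is exactly what keeps the control in [0, 1]. *)
Let fast_control (i : nat) (t : R) : R := n^-1 + (x0 i - m0) / gain.

Lemma fast_control_admissible : admissible p.+2 T fast_control.
Proof.
split=> [i _|t _]; first exact: measurable_cst.
split; last first.
  rewrite /fast_control big_split /= -mulr_suml sum_dev mul0r addr0.
  by rewrite sumr_const card_ord -(mulr_natl n^-1 p.+2) mulfV ?gt_eqF.
move=> i lt_i; have := sub_last_le_spread lt_i; have := last_le lt_i.
have := spread_le_gain; rewrite /spread /fast_control => le_gain le_i le_spread.
have dev_ge : - gain <= n * (x0 i - m0) by have := n_gt0; nra.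
have dev_le : n * (x0 i - m0) <= q * gain.
  by have := n_gt0; have := q_gt0; rewrite q_eq; nra.
apply/andP; split.
  have -> : n^-1 + (x0 i - m0) / gain = (gain + n * (x0 i - m0)) / (n * gain).
    by field; rewrite !gt_eqF.
  by apply: divr_ge0; [lra|exact: mulr_ge0 (ltW n_gt0) (ltW gain_gt0)].
rewrite -subr_ge0.
have -> : 1 - (n^-1 + (x0 i - m0) / gain) = (q * gain - n * (x0 i - m0)) / (n * gain).
  by rewrite q_eq; field; rewrite !gt_eqF.
by apply: divr_ge0; [lra|exact: mulr_ge0 (ltW n_gt0) (ltW gain_gt0)].
Qed.

Let slow_coef i := m0 - (x0 i - m0) / (X - 1).
Let fast_coef i := (x0 i - m0) * X / (X - 1).
Let fast_traj (i : nat) (t : R) : R :=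
  slow_coef i * expR (- n^-1 * t) + fast_coef i * expR (-1 * t).

Let avg_fast_traj t : avg p.+2 (fun j => fast_traj j t) = fs_mean p.+2 m0 t.
Proof.
have sum_slow_coef : \sum_(i < p.+2) slow_coef i = n * m0.
  by rewrite /slow_coef sumrB sumr_const card_ord -mulr_suml sum_dev mul0r subr0 mulr_natl.
rewrite [LHS]/avg /fast_traj big_split /= -!mulr_suml sum_slow_coef sum_dev /fs_mean.
by field; rewrite subr_eq0 (gt_eqF X_gt1) -natrD pnatr_eq0.
Qed.

Lemma fast_traj_is_traj : is_traj p.+2 T x0 fast_control fast_traj.
Proof.
move=> i lt_i t /andP[t_ge0 _].
have -> : rhs p.+2 fast_control fast_traj i =
    fun s => slow_coef i * (- n^-1 * expR (- n^-1 * s)) + fast_coef i * (-1 * expR (-1 * s)).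
  apply/funext => s; rewrite /rhs avg_fast_traj /fast_control /fast_traj /fs_mean.
  rewrite /slow_coef /fast_coef /gain.
  by rewrite q_eq; field; rewrite subr_eq0 !gt_eqF // ?subr_gt0 ?(gt_eqF X_gt1) // -q_eq.
have [int_rhs traj_eq] :=
  expR_combination_integral (slow_coef i) (fast_coef i) (- n^-1) (-1) t_ge0.
split=> //; rewrite /fast_traj traj_eq; congr (_ + _).
by rewrite /slow_coef /fast_coef; field; rewrite subr_eq0 gt_eqF.
Qed.

Let fast_traj_T i : fast_traj i T = fs_mean p.+2 m0 T.
Proof.
have X_E2 : X * expR (-1 * T) = expR (- n^-1 * T).
  by rewrite /X -expRD; congr expR; rewrite q_eq; field; rewrite gt_eqF.
rewrite /fast_traj /fs_mean -X_E2 /slow_coef /fast_coef.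
by field; rewrite subr_eq0 gt_eqF.
Qed.

Lemma fast_control_cost : exists b y, admissible p.+2 T b /\ is_traj p.+2 T x0 b y /\
  cost p.+2 (fun i => y i T) = fs_mean p.+2 m0 T ^+ 2.
Proof.
exists fast_control, fast_traj; split; first exact: fast_control_admissible.
split; first exact: fast_traj_is_traj.
rewrite /cost (eq_bigr (fun=> fs_mean p.+2 m0 T ^+ 2)) => [|i _]; last by rewrite fast_traj_T.
by rewrite sumr_const card_ord -(mulr_natl (fs_mean _ m0 T ^+ 2)) mulKf ?gt_eqF.
Qed.

End FastControl.

End RealLine.

Theorem theorem6 (R : realType) (N : nat) (T : R) (x0 : nat -> R)
  (a : nat -> R -> R) (x : nat -> R -> R) :
  (2 <= N)%N -> 0 < T ->
  0 < avg N x0 ->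
  (forall i j, (i <= j)%N -> (j < N)%N -> x0 j <= x0 i) ->
  tN N x0 <= T ->
  optimal N T x0 a x ->
  full_saturation N T a /\ (forall i, (i < N)%N -> x i T = avg N (fun j => x j T)).
Proof.
case: N => [|[|p]] // _ T_gt0 m0_gt0 x0_noninc tN_le_T [adm [traj opt]].
have [b [y [adm_b [traj_y cost_y]]]] := fast_control_cost T_gt0 m0_gt0 x0_noninc tN_le_T.
have cost_le : cost p.+2 (x^~ T) <= fs_mean p.+2 (avg p.+2 x0) T ^+ 2.
  by rewrite -cost_y; exact: opt adm_b traj_y.
have e_ge0 : 0 <= fs_mean p.+2 (avg p.+2 x0) T.
  exact: mulr_ge0 (ltW m0_gt0) (expR_ge0 _).
have TT : 0 <= T <= T by rewrite ltW ?lexx.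
have e_le_z := fs_mean_le_traj_mean (ltn0Sn _) adm traj (ltW m0_gt0) TT.
have [zT_eq consensus] :=
  cost_le_sqr_consensus (ltn0Sn _) (introT andP (conj e_ge0 e_le_z)) cost_le.
split=> //.
apply: (full_saturation_of_fs_mean (ltn0Sn _) adm traj m0_gt0 (ltW T_gt0)).
exact: traj_mean_eq_fs_mean (ltn0Sn _) adm traj m0_gt0 zT_eq.
Qed.
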